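(* Let $R=(S^0,\dots,S^T)$ be any $T$-covering in a symmetric congestion game in which every delay function is $f(x)=x$. Then $C(S^T)\le 2\Gamma(R)$.
   Context: A congestion game has players $N=\{1,\dots,n\}$, a finite resource set $E$ and strategy sets $\Sigma_i\subseteq 2^E$; it is symmetric if all $\Sigma_i$ equal a common set $\Sigma$. For a profile $S=(s_1,\dots,s_n)$, $n_e(S)=|\{i:e\in s_i\}|$. Here all delays are $f(x)=x$, so $c_i(S)=\sum_{e\in s_i}n_e(S)$ and $C(S)=\sum_i c_i(S)=\sum_{e\in E}n_e(S)^2$. Fix an optimal profile $S^*$ minimizing $C$. A best response of player $i$ in $S$ is a strategy $s_i^b\in\Sigma_i$ minimizing $c_i(S_{-i},\cdot)$ (where $(S_{-i},s_i')$ replaces $s_i$ by $s_i'$); if no strategy strictly decreases $i$'s cost, the best response is $s_i$ itself. A $T$-covering is a sequence of profiles $R=(S^0,\dots,S^T)$ with players $\pi(1),\dots,\pi(T)$ such that for each $1\le t\le T$, $S^t=(S^{t-1}_{-\pi(t)},s')$ with $s'$ a best response of $\pi(t)$ in $S^{t-1}$, and every player occurs at least once among $\pi(1),\dots,\pi(T)$. For each player $i$, $\mathrm{last}(i)=\max\{t:\pi(t)=i\}$. Define $\Gamma(R)=\frac1n\sum_{i=1}^n\sum_{e\in E}n_e(S^* )\bigl(n_e(S^{\mathrm{last}(i)-1})+1\bigr)$. *)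

From HB Require Import structures.
From mathcomp Require Import all_boot all_order all_algebra.
Set Implicit Arguments. Unset Strict Implicit. Unset Printing Implicit Defensive.

(* Players are 'I_n, resources a finType E, a profile assigns to each player
   a subset of E (its strategy). Delays are f(x) = x. *)
Definition profile (n : nat) (E : finType) := {ffun 'I_n -> {set E}}.

Definition valid (n : nat) (E : finType) (Sigma : {set {set E}}) (S : profile n E) :=
  forall i, S i \in Sigma.

Definition load (n : nat) (E : finType) (S : profile n E) (e : E) : nat :=
  #|[set i | e \in S i]|.

Definition pcost (n : nat) (E : finType) (S : profile n E) (i : 'I_n) : nat :=
  \sum_(e in S i) load S e.

Definition social (n : nat) (E : finType) (S : profile n E) : nat :=
  \sum_(e : E) (load S e) ^ 2.

Definition upd (n : nat) (E : finType) (S : profile n E) (i : 'I_n) (s : {set E})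
  : profile n E := [ffun j => if j == i then s else S j].

Definition optimal (n : nat) (E : finType) (Sigma : {set {set E}}) (S : profile n E) :=
  valid Sigma S /\ forall S' : profile n E, valid Sigma S' -> social S <= social S'.

Definition best_response (n : nat) (E : finType) (Sigma : {set {set E}})
  (S : profile n E) (i : 'I_n) (s' : {set E}) :=
  [/\ s' \in Sigma,
      (forall s'', s'' \in Sigma -> pcost (upd S i s') i <= pcost (upd S i s'') i) &
      ((forall s'', s'' \in Sigma -> pcost S i <= pcost (upd S i s'') i) -> s' = S i)].

Definition covering (n : nat) (E : finType) (Sigma : {set {set E}})
  (T : nat) (S : nat -> profile n E) (pi : nat -> 'I_n) :=
  [/\ valid Sigma (S 0),
      (forall t, 1 <= t <= T ->
         exists2 s', best_response Sigma (S t.-1) (pi t) s' &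
                     S t = upd (S t.-1) (pi t) s') &
      (forall i : 'I_n, exists2 t, 1 <= t <= T & pi t = i)].

Definition lastt (n : nat) (T : nat) (pi : nat -> 'I_n) (i : 'I_n) : nat :=
  \max_(t < T.+1 | (0 < t) && (pi t == i)) (t : nat).

Definition Gamma (n : nat) (E : finType) (Sstar : profile n E)
  (T : nat) (S : nat -> profile n E) (pi : nat -> 'I_n) : rat :=
  (n%:R)^-1 * (\sum_(i < n) \sum_(e : E)
     (load Sstar e * (load (S (lastt T pi i).-1) e + 1))%N%:R)%R.

From HB Require Import structures.
From mathcomp Require Import all_boot all_order all_algebra.
Import Order.TTheory GRing.Theory Num.Theory.

(* Write L(i) = last(i) and Y = sum_i c_i(S^{L(i)}), the total cost the
   players pay right after their last move.
   - Upper bound: S^{L(i)}_i is a best response of i in S^{L(i)-1}, so it is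
     no worse than deviating to any optimal strategy s*_j, which costs at most
     sum_{e in s*_j} (n_e(S^{L(i)-1}) + 1).  Averaging over the n players j
     gives  n * Y <= n * Gamma(R).
   - Lower bound: strategies are frozen after the last move, so in S^{L(i)}
     every j with L(j) <= L(i) already plays S^T_j; hence Y counts, for every
     resource e, all pairs (i, j) using e in S^T with L(j) <= L(i).  Since
     every pair is ordered one way or the other, n_e(S^T)^2 is at most twice
     that count, i.e.  C(S^T) <= 2 Y. *)

Lemma load_sum n (E : finType) (S : profile n E) (e : E) :
  load S e = \sum_j (e \in S j : nat).
Proof.
by rewrite /load -sum1dep_card big_mkcond; apply: eq_bigr => j _; case: ifP.
Qed.

Lemma load_upd_le n (E : finType) (S : profile n E) (i : 'I_n) (s : {set E}) (e : E) :
  load (upd S i s) e <= load S e + 1.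
Proof.
have sub : [set j | e \in upd S i s j] \subset i |: [set j | e \in S j].
  by apply/subsetP => j; rewrite !inE ffunE; case: eqP => [->|_]; rewrite ?eqxx.
rewrite /load (leq_trans (subset_leq_card sub)) //.
by rewrite cardsU1 addnC leq_add2l leq_b1.
Qed.

Lemma best_response_cost_le {n} {E : finType} {Sigma : {set {set E}}}
    {S : profile n E} {i : 'I_n} {s' s : {set E}} :
  best_response Sigma S i s' -> s \in Sigma ->
  pcost (upd S i s') i <= \sum_(e in s) (load S e + 1).
Proof.
case=> _ br_min _ sSigma; apply: leq_trans (br_min _ sSigma) _.
by rewrite /pcost ffunE eqxx; apply: leq_sum => e _; apply: load_upd_le.
Qed.

Lemma sum_over_strategies n (E : finType) (S : profile n E) (f : E -> nat) :
  \sum_(j < n) \sum_(e in S j) f e = \sum_e load S e * f e.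
Proof.
rewrite (eq_bigr (fun j => \sum_e (if e \in S j then f e else 0))); last first.
  by move=> j _; rewrite big_mkcond.
rewrite exchange_big /=; apply: eq_bigr => e _.
rewrite load_sum big_distrl /=; apply: eq_bigr => j _.
by case: (e \in S j); rewrite ?mul1n ?mul0n.
Qed.

Lemma best_response_average {n} {E : finType} {Sigma : {set {set E}}}
    {Sstar S : profile n E} {i : 'I_n} {s' : {set E}} :
  valid Sigma Sstar -> best_response Sigma S i s' ->
  n * pcost (upd S i s') i <= \sum_e load Sstar e * (load S e + 1).
Proof.
move=> val_star br; rewrite -sum_over_strategies.
have -> : n * pcost (upd S i s') i = \sum_(j < n) pcost (upd S i s') i.
  by rewrite sum_nat_const card_ord.
by apply: leq_sum => j _; apply: best_response_cost_le br (val_star j).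
Qed.

(* Squaring a sum: every pair (i, j) is ordered by the weight w in at least
   one direction, so the square is at most twice the sum over pairs with
   w j <= w i. *)
Lemma square_le_ordered_pairs {I : finType} (a w : I -> nat) :
  (\sum_i a i) ^ 2 <= 2 * \sum_i \sum_j a i * a j * (w j <= w i).
Proof.
pose P i j := a i * a j * (w j <= w i).
have sym : \sum_i \sum_j P i j = \sum_i \sum_j P j i by rewrite exchange_big.
rewrite mul2n -addnn {2}sym -big_split /= expnS expn1 big_distrl /=.
apply: leq_sum => i _; rewrite -big_split big_distrr /=.
apply: leq_sum => j _; rewrite /P [a j * a i]mulnC.
by case: (leqP (w j) (w i)) => [_|/ltnW ->]; rewrite muln1 ?leq_addr ?leq_addl.
Qed.

Lemma lastt_spec (n T : nat) (pi : nat -> 'I_n) (i : 'I_n) :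
  (exists2 t, 1 <= t <= T & pi t = i) ->
  [/\ 0 < lastt T pi i <= T, pi (lastt T pi i) = i &
      forall t, lastt T pi i < t <= T -> pi t != i].
Proof.
move=> [t /andP[t_pos tT] pit].
pose moves := fun k : 'I_T.+1 => (0 < k) && (pi k == i).
have moves_nonempty : 0 < #|moves|.
  by apply/card_gt0P; exists (Ordinal (tT : t < T.+1)); rewrite unfold_in /= t_pos pit eqxx.
have [k kmove k_max] := eq_bigmax_cond (fun k : 'I_T.+1 => (k : nat)) moves_nonempty.
have -> : lastt T pi i = k by rewrite -k_max.
move: kmove; rewrite unfold_in => /andP[k_pos /eqP pik].
split=> //; first by rewrite k_pos -ltnS ltn_ord.
move=> t' /andP[kt' t'T]; apply/eqP => pit'.
have : t' <= \max_(k0 < T.+1 | moves k0) (k0 : nat).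
  apply: (leq_bigmax_cond (Ordinal (t'T : t' < T.+1))).
  by rewrite /moves /= pit' eqxx andbT (leq_ltn_trans _ kt').
by rewrite k_max leqNgt kt'.
Qed.
Arguments lastt_spec {n T pi i}.

Section Covering.

Context {n : nat} {E : finType} {Sigma : {set {set E}}}.
Context {T : nat} {S : nat -> profile n E} { pi : nat -> 'I_n }.
Hypothesis cover : covering Sigma T S pi.

Local Notation L := (lastt T pi).

Lemma strategy_frozen (j : 'I_n) (t : nat) : L j <= t <= T -> S t j = S T j.
Proof.
have [_ step moves] := cover; have [_ _ no_move] := lastt_spec (moves j).
have frozen k : L j + k <= T -> S (L j + k) j = S (L j) j.
  elim: k => [|k IH] kT; first by rewrite addn0.
  have kT' : L j + k < T by rewrite -addnS.
  have k_step : 0 < L j + k.+1 <= T by rewrite addnS.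
  have [s' _ ->] := step _ k_step.
  have later : L j < (L j + k).+1 <= T by rewrite ltnS leq_addr.
  by rewrite ffunE addnS /= eq_sym (negbTE (no_move _ later)) IH ?(ltnW kT').
case/andP=> Lt tT; have LT := leq_trans Lt tT.
by rewrite -(subnKC Lt) frozen ?subnKC // -[in RHS](subnKC LT) frozen ?subnKC.
Qed.

Lemma last_cost_lower (i : 'I_n) :
  \sum_e \sum_j (e \in S T i) * (e \in S T j) * (L j <= L i)
    <= pcost (S (L i)) i.
Proof.
have [_ _ moves] := cover; have [/andP[_ LiT] _ _] := lastt_spec (moves i).
rewrite /pcost strategy_frozen ?leqnn ?LiT // [leqRHS]big_mkcond /=.
apply: leq_sum => e _; case: (e \in S T i) => /=; last first.
  by rewrite big1 // => j _; rewrite !mul0n.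
rewrite load_sum; apply: leq_sum => j _; rewrite mul1n.
case: (leqP (L j) (L i)) => [LjLi|_]; last by rewrite muln0.
by rewrite muln1 strategy_frozen // LjLi LiT.
Qed.

Lemma social_le_last_costs : social (S T) <= 2 * \sum_i pcost (S (L i)) i.
Proof.
apply: (@leq_trans
  (\sum_e 2 * \sum_i \sum_j (e \in S T i) * (e \in S T j) * (L j <= L i))).
  rewrite /social; apply: leq_sum => e _; rewrite load_sum.
  exact: (square_le_ordered_pairs (fun i => (e \in S T i : nat)) L).
rewrite -big_distrr leq_mul2l /= exchange_big /=.
by apply: leq_sum => i _; apply: last_cost_lower.
Qed.

Lemma last_costs_le_Gamma (Sstar : profile n E) :
  valid Sigma Sstar ->
  n * \sum_i pcost (S (L i)) i
    <= \sum_i \sum_e load Sstar e * (load (S (L i).-1) e + 1).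
Proof.
move=> val_star; have [_ step moves] := cover.
rewrite big_distrr /=; apply: leq_sum => i _.
have [Li_range piLi _] := lastt_spec (moves i).
have [s' br ->] := step (L i) Li_range; rewrite piLi in br *.
exact: best_response_average br.
Qed.

End Covering.

Lemma le_twice_average (R : numFieldType) (n a b x : nat) :
  0 < n -> a <= 2 * b -> n * b <= x ->
  (a%:R <= 2 * (n%:R^-1 * x%:R) :> R)%R.
Proof.
move=> n_pos a_le nb_le.
rewrite (le_trans (_ : _ <= (2 * b)%N%:R)%R) ?ler_nat // natrM ler_wpM2l //.
by rewrite ler_pdivlMl ?ltr0n // -natrM ler_nat.
Qed.

Theorem lemma5 (n : nat) (E : finType) (Sigma : {set {set E}})
  (Sstar : profile n E) (T : nat) (S : nat -> profile n E) (pi : nat -> 'I_n) :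
  optimal Sigma Sstar ->
  covering Sigma T S pi ->
  ((social (S T))%:R <= 2 * Gamma Sstar T S pi :> rat)%R.
Proof.
move=> [val_star _] cover.
set Y := \sum_i pcost (S (lastt T pi i)) i.
set X := \sum_i \sum_e load Sstar e * (load (S (lastt T pi i).-1) e + 1).
have social_le : social (S T) <= 2 * Y := social_le_last_costs cover.
have nY_le : n * Y <= X := last_costs_le_Gamma cover Sstar val_star.
have -> : Gamma Sstar T S pi = (n%:R^-1 * X%:R)%R.
  by rewrite /Gamma /X natr_sum; congr (_ * _)%R; apply: eq_bigr => i _; rewrite natr_sum.
have [n0 | n_pos] := posnP n; last exact: le_twice_average n_pos social_le nY_le.
have Y0 : Y = 0 by rewrite /Y big1 // => i _; have := ltn_ord i; rewrite [m in _ < m]n0.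
by move: social_le; rewrite Y0 leqn0 => /eqP ->; rewrite mulr_ge0 ?mulr_ge0 ?invr_ge0.
Qed.
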